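(* Let $(X,\mathcal{A},\mu,\tau,C_\tau)$ be a composition dynamical system on the Orlicz–Lorentz space $\mathbb{L}^{\varphi,h}(\mu)$, where in addition $\tau$ is bijective and $\tau^{-1}$ also satisfies $\mu(\tau(A))\le M'\mu(A)$ for all $A\in\mathcal{A}$ and some $M'>0$, so that $C_\tau$ is invertible with $C_\tau^{-1}=C_{\tau^{-1}}$. Then $C_\tau$ is expansive if and only if for every $A\in\mathcal{A}$ with $0<\mu(A)<\infty$, $$\inf_{n\in\mathbb{Z}}\ \varphi^{-1}\!\left(\frac{1}{\int_0^{\mu(\tau^{-n}(A))}h(t)\,dt}\right)=0 .$$
   Context: Let $(X,\mathcal{A},\mu)$ be a measure space. For a measurable $g$, its distribution function is $\mu_g(\lambda)=\mu\{x:|g(x)|>\lambda\}$ and its non-increasing rearrangement is $g^*(t)=\inf\{\lambda>0:\mu_g(\lambda)\le t\}$. An Orlicz function is a convex $\varphi:[0,\infty)\to[0,\infty)$ with $\varphi(0)=0$ and $\varphi(s)\to\infty$ as $s\to\infty$; here $\varphi$ is assumed continuous and strictly increasing, and $\varphi^{-1}$ denotes its inverse. A weight is a locally integrable, non-increasing function $h:[0,\mu(X))\to(0,\infty)$. The Orlicz–Lorentz space is $\mathbb{L}^{\varphi,h}(\mu)=\{g \text{ measurable}: I_{\varphi,h}(\lambda g)<\infty \text{ for some }\lambda>0\}$ with $I_{\varphi,h}(g)=\int_0^{\mu(X)}\varphi(g^*(t))h(t)\,dt$, normed by $\|g\|_{\varphi,h}=\inf\{\lambda>0: I_{\varphi,h}(g/\lambda)\le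 1\}$ (functions equal a.e. identified). For $A\in\mathcal{A}$ with $0<\mu(A)<\infty$ one has $\|\chi_A\|_{\varphi,h}=1/\varphi^{-1}\big(1/\int_0^{\mu(A)}h(t)\,dt\big)$. A composition dynamical system $(X,\mathcal{A},\mu,\tau,C_\tau)$ means: $(X,\mathcal{A},\mu)$ is $\sigma$-finite; $\tau:X\to X$ is injective and bi-measurable; there is $M>0$ with $\mu(\tau^{-1}(A))\le M\mu(A)$ for all $A\in\mathcal{A}$; and $C_\tau g=g\circ\tau$ is the (bounded) composition operator on $\mathbb{L}^{\varphi,h}(\mu)$. For an invertible bounded operator $T$ on a Banach space $Y$ with unit sphere $S_Y$: $T$ is expansive if for every $y\in S_Y$ there is $n\in\mathbb{Z}$ with $\|T^n y\|\ge 2$ (equivalently, $\sup_{n\in\mathbb{Z}}\|T^n y\|=\infty$ for every $y\neq0$). *)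

From HB Require Import structures.
From mathcomp Require Import all_boot all_order all_algebra.
From mathcomp Require Import all_classical all_reals all_analysis.
Set Implicit Arguments. Unset Strict Implicit. Unset Printing Implicit Defensive.
Import Order.TTheory GRing.Theory Num.Theory.
Import numFieldNormedType.Exports.
Local Open Scope classical_set_scope.
Local Open Scope ring_scope.
Local Open Scope ereal_scope.

Section OrliczLorentz.
Context {d : measure_display} {T : measurableType d} {R : realType}.

Definition distrib (mu : set T -> \bar R) (g : T -> R) (l : R) : \bar R :=
  mu [set x | (l < `|g x|)%R].

Definition rearr (mu : set T -> \bar R) (g : T -> R) (t : R) : \bar R :=
  ereal_inf [set l%:E | l in [set l : R | (0 < l)%R /\ distrib mu g l <= t%:E]].

Definition phiE (phi : R -> R) (x : \bar R) : \bar R :=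
  match x with
  | EFin r => (phi r)%:E
  | +oo => +oo
  | -oo => 0
  end.

Definition supp_int (mu : set T -> \bar R) : set R :=
  [set t : R | (0 <= t)%R /\ t%:E < mu setT].

Definition modular (mu : set T -> \bar R) (phi h : R -> R) (g : T -> R) : \bar R :=
  \int[lebesgue_measure]_(t in supp_int mu) (phiE phi (rearr mu g t) * (h t)%:E).

Definition in_OL (mu : set T -> \bar R) (phi h : R -> R) (g : T -> R) : Prop :=
  measurable_fun setT g /\
  exists l : R, (0 < l)%R /\ modular mu phi h (fun x => l * g x)%R < +oo.

Definition olnorm (mu : set T -> \bar R) (phi h : R -> R) (g : T -> R) : \bar R :=
  ereal_inf [set l%:E | l in [set l : R | (0 < l)%R /\
                          modular mu phi h (fun x => g x / l)%R <= 1]].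

Definition tau_iter (tau tauinv : T -> T) (n : int) : T -> T :=
  match n with
  | Posz k => iter k tau
  | Negz k => iter k.+1 tauinv
  end.

(* expansivity of C_tau: every g in the unit sphere has some n in Z with
   ||C_tau^n g|| >= 2, where C_tau^n g = g o tau^n *)
Definition ol_expansive (mu : set T -> \bar R) (phi h : R -> R)
  (tau tauinv : T -> T) : Prop :=
  forall g : T -> R, in_OL mu phi h g -> olnorm mu phi h g = 1 ->
    exists n : int, 2%:E <= olnorm mu phi h (g \o tau_iter tau tauinv n).

Definition hint (h : R -> R) (a : \bar R) : \bar R :=
  \int[lebesgue_measure]_(t in [set t : R | (0 <= t)%R /\ t%:E < a]) (h t)%:E.

(* phi^{-1}(1 / int_0^a h), with 1/+oo = 0 and phi^{-1}(0) = 0 *)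
Definition fundamental (phi_inv h : R -> R) (a : \bar R) : R :=
  match hint h a with
  | EFin r => phi_inv (r^-1)%R
  | _ => 0%R
  end.

End OrliczLorentz.

(* Write F(a) = phi^-1 (1 / int_0^a h).  A multiple c 1_B of the indicator of a set of finite
   positive measure has norm c / F(mu B), and (c 1_B) o tau^m = c 1_(tau^-m B).  Hence, if C_tau
   is expansive, testing it on the normalized indicator of B yields m with
   F(mu tau^-m B) <= F(mu B) / 2, and iterating along the orbit drives the infimum to 0.
   Conversely, a unit vector g has a level set {|g| > e} of positive measure; by sigma-finiteness
   it contains a set B of finite positive measure, and for n with F(mu tau^-n B) < e / 2 the bound
   |g o tau^n| >= e 1_(tau^-n B) gives |g o tau^n| >= e / F(mu tau^-n B) >= 2. *)
From HB Require Import structures.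
From mathcomp Require Import all_boot all_order all_algebra.
From mathcomp Require Import all_classical all_reals all_analysis.
From mathcomp Require Import zify measurable_realfun.
Import Order.TTheory GRing.Theory Num.Theory.
Import numFieldNormedType.Exports.
Set Implicit Arguments. Unset Strict Implicit. Unset Printing Implicit Defensive.
Local Open Scope classical_set_scope.
Local Open Scope ring_scope.

Section tau_iter.
Context {d : measure_display} {T : measurableType d} (tau tauinv : T -> T).
Hypotheses (tauK : cancel tau tauinv) (tauinvK : cancel tauinv tau).
Local Notation ti := (tau_iter tau tauinv).

Lemma tau_iter1D (z : int) x : ti (1 + z) x = tau (ti z x).
Proof.
case: z => [k|[|k]].
- by have -> : 1 + Posz k = Posz k.+1 by lia.
- by have -> : 1 + Negz 0 = Posz 0 by rewrite NegzE; lia.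
- have -> : 1 + Negz k.+1 = Negz k by rewrite !NegzE; lia.
  by rewrite /tau_iter iterS tauinvK.
Qed.

Lemma tau_iterB1 (z : int) x : ti (z - 1) x = tauinv (ti z x).
Proof.
case: z => [[|k]|k] //.
- have -> : Posz k.+1 - 1 = Posz k by lia.
  by rewrite /tau_iter iterS tauK.
- by have -> : Negz k - 1 = Negz k.+1 by rewrite !NegzE; lia.
Qed.

Lemma tau_iterD (a b : int) x : ti a (ti b x) = ti (a + b) x.
Proof.
case: a => k; elim: k => [|k IH].
- by rewrite add0r.
- have -> : Posz k.+1 + b = 1 + (Posz k + b) by lia.
  by rewrite tau_iter1D -IH /tau_iter iterS.
- have -> : Negz 0 + b = b - 1 by rewrite NegzE; lia.
  by rewrite tau_iterB1.
- have -> : Negz k.+1 + b = (Negz k + b) - 1 by rewrite !NegzE; lia.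
  by rewrite tau_iterB1 -IH /tau_iter iterS.
Qed.

End tau_iter.

Definition pos_fin_set {d} {T : measurableType d} {R : realType}
  (mu : {measure set T -> \bar R}) (A : set T) : Prop :=
  [/\ measurable A, (0 < mu A)%E & (mu A < +oo)%E].

Section preimage.
Local Open Scope ereal_scope.
Context {d : measure_display} {T : measurableType d} {R : realType}
  (mu : {measure set T -> \bar R}).

Lemma measurable_preimageT (f : T -> T) (A : set T) :
  measurable_fun setT f -> measurable A -> measurable (f @^-1` A).
Proof. by move=> mf mA; rewrite -(setTI (f @^-1` A)); exact: mf. Qed.

Lemma measurable_fun_iter (f : T -> T) k :
  measurable_fun setT f -> measurable_fun setT (iter k f).
Proof.
move=> mf; elim: k => [|k IH] /=; first exact: measurable_id.
exact: measurableT_comp mf IH.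
Qed.

Lemma pos_fin_set_preimage (f g : T -> T) (K K' : R) (A : set T) :
  cancel g f -> measurable_fun setT f -> (0 <= K)%R ->
  (forall B, measurable B -> mu (f @^-1` B) <= K%:E * mu B) ->
  (forall B, measurable B -> mu (g @^-1` B) <= K'%:E * mu B) ->
  pos_fin_set mu A -> pos_fin_set mu (f @^-1` A).
Proof.
move=> gK mf K0 fK gK' [mA A0 Aoo]; have mfA := measurable_preimageT mf mA.
split => //.
- rewrite lt0e measure_ge0 andbT; apply/eqP => fA0.
  have : mu A <= K'%:E * mu (f @^-1` A).
    rewrite {1}(_ : A = g @^-1` (f @^-1` A)) ?gK' //.
    by apply/seteqP; split=> x /=; rewrite gK.
  by rewrite fA0 mule0 leNgt A0.
- by apply: le_lt_trans (fK _ mA) _; rewrite lte_mul_pinfty.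
Qed.

Lemma pos_fin_set_preimage_iter (f : T -> T) k (A : set T) :
  (forall B, pos_fin_set mu B -> pos_fin_set mu (f @^-1` B)) ->
  pos_fin_set mu A -> pos_fin_set mu (iter k f @^-1` A).
Proof. by move=> hf; elim: k A => [|k IH] A gA //=; exact: IH (hf _ gA). Qed.

End preimage.

Section tau_measure.
Local Open Scope ereal_scope.
Context {d : measure_display} {T : measurableType d} {R : realType}
  (mu : {measure set T -> \bar R}) (tau tauinv : T -> T) (M M' : R).
Hypotheses (tauK : cancel tau tauinv) (tauinvK : cancel tauinv tau)
  (mtau : measurable_fun setT tau)
  (mtau_img : forall A : set T, measurable A -> measurable (tau @` A))
  (M0 : (0 < M)%R) (muM : forall A, measurable A -> mu (tau @^-1` A) <= M%:E * mu A)
  (M'0 : (0 < M')%R) (muM' : forall A, measurable A -> mu (tau @` A) <= M'%:E * mu A).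

Lemma preimage_tauinv (A : set T) : tauinv @^-1` A = tau @` A.
Proof.
by apply/seteqP; split => x /=; [exists (tauinv x)|case=> y Ay <-; rewrite tauK].
Qed.

Lemma measurable_tauinv : measurable_fun setT tauinv.
Proof. by move=> _ Y mY; rewrite setTI preimage_tauinv; exact: mtau_img. Qed.

Lemma measurable_tau_iter n : measurable_fun setT (tau_iter tau tauinv n).
Proof. by case: n => k; apply: measurable_fun_iter; [|exact: measurable_tauinv]. Qed.

Lemma pos_fin_set_preimage_tau_iter n A :
  pos_fin_set mu A -> pos_fin_set mu (tau_iter tau tauinv n @^-1` A).
Proof.
have muM'inv B : measurable B -> mu (tauinv @^-1` B) <= M'%:E * mu B.
  by rewrite preimage_tauinv; exact: muM'.
case: n => k; apply: pos_fin_set_preimage_iter => B.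
- exact: (pos_fin_set_preimage tauinvK mtau (ltW M0) muM muM'inv).
- exact: (pos_fin_set_preimage tauK measurable_tauinv (ltW M'0) muM'inv muM).
Qed.

End tau_measure.

Section ereal_inf_pos.
Local Open Scope ereal_scope.
Context {R : realType}.

Lemma ereal_inf_pos_all (P : R -> Prop) : (forall l, (0 < l)%R -> P l) ->
  ereal_inf [set l%:E | l in [set l : R | (0 < l)%R /\ P l]] = 0.
Proof.
move=> HP; apply/eqP; rewrite eq_le; apply/andP; split.
- apply/lee_addgt0Pr => e e0; rewrite add0e; apply: ereal_inf_lbound.
  by exists e => //; split => //; exact: HP.
- by apply: le_ereal_inf_tmp => _ [l [l0 _] <-]; rewrite lee_fin ltW.
Qed.

Lemma ereal_inf_pos_ge (c : R) (P : R -> Prop) : (0 < c)%R ->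
  (forall l, (0 < l)%R -> (P l <-> (c <= l)%R)) ->
  ereal_inf [set l%:E | l in [set l : R | (0 < l)%R /\ P l]] = c%:E.
Proof.
move=> c0 HP; apply/eqP; rewrite eq_le; apply/andP; split.
- by apply: ereal_inf_lbound; exists c => //; split => //; apply/HP.
- by apply: le_ereal_inf_tmp => _ [l [l0 /(HP _ l0) cl] <-]; rewrite lee_fin.
Qed.

End ereal_inf_pos.

Lemma inf_range_eq0 {R : realType} {I : Type} (u : I -> R) (c : R) (i0 : I) :
  (forall i, 0 < u i) -> (forall k : nat, exists i, 2 ^+ k * u i <= c) ->
  inf (range u) = 0.
Proof.
move=> u_gt0 u_small; have S0 : range u !=set0 by exists (u i0), i0.
have lbS : lbound (range u) 0 by move=> _ [i _ <-]; exact/ltW.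
apply/eqP; rewrite eq_le lb_le_inf// andbT; apply/ler_addgt0Pr => e e0.
rewrite add0r; set k := (Num.truncn (`|c| / e)).+1.
have [i ui] := u_small k; apply: le_trans (ge_inf (ex_intro _ 0 lbS) (imageT u i)) _.
have k_gt : `|c| / e < 2 ^+ k.
  apply: lt_le_trans (truncnS_gt _) _.
  by rewrite -natrX ler_nat ltnW// ltn_expl.
rewrite -(ler_pM2l (exprn_gt0 k (ltr0Sn R 1))); apply: le_trans ui _.
by rewrite (le_trans (ler_norm c))// ltW// -ltr_pdivrMr.
Qed.

Section orlicz.
Context {R : realType} (phi phi_inv : R -> R).
Hypotheses (phi0 : phi 0 = 0)
  (phi_incr : forall x y : R, 0 <= x -> x < y -> phi x < phi y)
  (phi_invK : forall s : R, 0 <= s -> 0 <= phi_inv s /\ phi (phi_inv s) = s).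

Lemma phi_le x y : 0 <= x -> x <= y -> phi x <= phi y.
Proof. by move=> x0; rewrite le_eqVlt => /predU1P[->//|xy]; exact/ltW/phi_incr. Qed.

Lemma phi_ge0 x : 0 <= x -> 0 <= phi x.
Proof. by move=> x0; rewrite -phi0; exact: phi_le. Qed.

Lemma phi_leE x y : 0 <= x -> 0 <= y -> (phi x <= phi y) = (x <= y).
Proof.
move=> x0 y0; apply/idP/idP; last exact: phi_le.
by apply: contraTT; rewrite -!ltNge; exact: phi_incr.
Qed.

Lemma phi_inv_gt0 r : 0 < r -> 0 < phi_inv r.
Proof.
move=> r0; have [p0 pp] := phi_invK (ltW r0).
rewrite lt_neqAle p0 andbT; apply: contraTneq r0 => p00.
by rewrite -pp -p00 phi0 ltxx.
Qed.

Lemma phi_le_inv r c : 0 < r -> 0 <= c ->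
  (((phi c)%:E * r%:E <= 1)%E <-> c <= phi_inv r^-1).
Proof.
move=> r0 c0; have [p0 pp] : 0 <= phi_inv r^-1 /\ phi (phi_inv r^-1) = r^-1.
  by apply: phi_invK; rewrite invr_ge0 ltW.
by rewrite -EFinM lee_fin -(phi_leE c0 p0) pp -[r^-1]mul1r ler_pdivlMr.
Qed.

End orlicz.

Lemma set_ge0_lt_itv {R : realType} (m : R) :
  [set t : R | 0 <= t /\ (t%:E < m%:E)%E] = `[0, m[%classic.
Proof.
by apply/seteqP; split => t /=; rewrite in_itv /= lte_fin => /andP || case=> -> ->.
Qed.

Section weight.
Local Open Scope ereal_scope.
Context {R : realType} (h : R -> R) (X : \bar R).
Hypotheses (h_gt0 : forall t : R, (0 <= t)%R -> t%:E < X -> (0 < h t)%R)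
  (h_noninc : forall s t : R, (0 <= s)%R -> (s <= t)%R -> t%:E < X -> (h t <= h s)%R).

(* A nonincreasing extension of h to the whole line, so that measurability of monotone
   functions applies. *)
Let hext (t : R) : R := if (Num.max t 0%R)%:E < X then h (Num.max t 0%R) else 0%R.

Let hext_noninc : {homo hext : s t / (s <= t)%R >-> (t <= s)%R}.
Proof.
move=> s t st; rewrite /hext.
have mst : (Num.max s 0 <= Num.max t 0)%R by rewrite ge_max !le_max st lexx orbT.
case: ifPn => ht.
- have -> : (Num.max s 0%R)%:E < X by apply: le_lt_trans ht; rewrite lee_fin.
  by apply: h_noninc; rewrite // le_max lexx orbT.
- by case: ifPn => hs //; apply/ltW/h_gt0; rewrite // le_max lexx orbT.
Qed.

Lemma measurable_weight (D : set R) : measurable D ->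
  D `<=` [set t | (0 <= t)%R /\ t%:E < X] -> measurable_fun D h.
Proof.
move=> mD DX; apply: (eq_measurable_fun hext).
  by move=> t /set_mem/DX[t0 tX]; rewrite /hext (max_idPl t0) tX.
exact: nonincreasing_measurable mD hext_noninc.
Qed.

Lemma hint_le (m : R) : (0 < m)%R -> m%:E <= X -> hint h m%:E <= (h 0 * m)%:E.
Proof.
move=> m0 mX; rewrite /hint set_ge0_lt_itv.
apply: le_trans (_ : \int[lebesgue_measure]_(t in `[0%R, m[) (h 0)%:E <= _).
  apply: ge0_le_integral => //.
  - move=> t; rewrite /= in_itv/= => /andP[t0 tm].
    by rewrite lee_fin ltW// h_gt0// (lt_le_trans _ mX).
  - apply/measurable_EFinP; apply: measurable_weight => // t.
    by rewrite /= in_itv/= => /andP[t0 tm]; split => //; rewrite (lt_le_trans _ mX).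
  - move=> t; rewrite /= in_itv/= => /andP[t0 tm].
    by rewrite lee_fin h_noninc// (lt_le_trans _ mX).
have Lm : lebesgue_measure (`[0%R, m[%classic : set R) = m%:E.
  by rewrite lebesgue_measure_itv /= lte_fin m0 sube0.
rewrite integral_cst// EFinM le_eqVlt; apply/predU1P; left.
by congr (_ * _); exact: Lm.
Qed.

Lemma hint_ge (m : R) : (0 < m)%R -> m%:E <= X ->
  (h (m / 2) * (m / 2))%:E <= hint h m%:E.
Proof.
move=> m0 mX; have m2 : (0 < m / 2)%R by rewrite divr_gt0.
have m2m : (m / 2 < m)%R by rewrite ltr_pdivrMr// ltr_pMr// ltr1n.
have sub : `[0%R, (m / 2)%R]%classic `<=` [set t : R | (0 <= t)%R /\ t%:E < m%:E].
  by move=> t; rewrite /= in_itv/= => /andP[t0 tm]; rewrite lte_fin (le_lt_trans tm).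
have mS : measurable [set t : R | (0 <= t)%R /\ t%:E < m%:E].
  by rewrite set_ge0_lt_itv; exact: measurable_itv.
have inX t : t%:E < m%:E -> t%:E < X by move=> /lt_le_trans; apply.
have mh : measurable_fun [set t : R | (0 <= t)%R /\ t%:E < m%:E] (EFin \o h).
  by apply/measurable_EFinP; apply: measurable_weight => // t [t0 /inX].
have h0 t : (0 <= t)%R /\ t%:E < m%:E -> 0 <= (h t)%:E.
  by move=> [t0 /inX tX]; rewrite lee_fin ltW// h_gt0.
have mS2 : measurable (`[0%R, (m / 2)%R]%classic : set R) by exact: measurable_itv.
rewrite /hint; apply: (le_trans _ (ge0_subset_integral lebesgue_measure mS2 mS mh h0 sub)).
have Lm : lebesgue_measure (`[0%R, (m / 2)%R]%classic : set R) = (m / 2)%:E.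
  by rewrite lebesgue_measure_itv /= lte_fin m2 sube0.
apply: le_trans (_ : \int[lebesgue_measure]_(t in `[0%R, (m / 2)%R]) (h (m / 2))%:E <= _).
  rewrite integral_cst// EFinM le_eqVlt; apply/predU1P; left.
  by congr (_ * _); exact/esym/Lm.
apply: ge0_le_integral => //.
- by move=> t _; rewrite lee_fin ltW// h_gt0 ?divr_ge0 ?ltW// inX// lte_fin.
- exact: measurable_funS mS sub mh.
- move=> t; rewrite /= in_itv/= => /andP[t0 tm].
  by rewrite lee_fin h_noninc// inX// lte_fin (le_lt_trans tm).
Qed.

Lemma hint_fin_gt0 (m : R) : (0 < m)%R -> m%:E <= X ->
  exists2 r : R, hint h m%:E = r%:E & (0 < r)%R.
Proof.
move=> m0 mX; have := hint_le m0 mX; have := hint_ge m0 mX.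
have : (0 < h (m / 2) * (m / 2))%R.
  rewrite mulr_gt0 ?divr_gt0// h_gt0 ?divr_ge0 ?ltW// (lt_le_trans _ mX)//.
  by rewrite lte_fin ltr_pdivrMr// ltr_pMr// ltr1n.
case: (hint h m%:E) => [r| |]// pos low _.
by exists r => //; rewrite -lte_fin (lt_le_trans _ low)// lte_fin.
Qed.

End weight.

(* Rearrangements are not known to be measurable here; monotonicity still holds because the
   integral of a nonnegative function is a supremum over the simple functions below it. *)
Lemma ge0_le_integral_nomeas {d} {T : measurableType d} {R : realType}
  (mu : {measure set T -> \bar R}) (D : set T) (f1 f2 : T -> \bar R) :
  (forall x, D x -> (0 <= f1 x)%E) -> (forall x, D x -> (f1 x <= f2 x)%E) ->
  (\int[mu]_(x in D) f1 x <= \int[mu]_(x in D) f2 x)%E.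
Proof.
move=> f1_ge0 f12.
have f2_ge0 x : D x -> (0 <= f2 x)%E by move=> Dx; exact: le_trans (f1_ge0 _ Dx) (f12 _ Dx).
rewrite (ge0_integralE _ f1_ge0) (ge0_integralE _ f2_ge0) /=.
apply: ge_ereal_sup => _ [g gf <-]; apply: ereal_sup_ubound; exists g => //= x.
apply: le_trans (gf x) _; rewrite !patchE; case: ifPn => // /[!inE] Dx.
exact: f12.
Qed.

Section rearrangement.
Local Open Scope ereal_scope.
Context {d : measure_display} {T : measurableType d} {R : realType}
  (mu : {measure set T -> \bar R}).

Lemma measurable_level (g : T -> R) (l : R) : measurable_fun setT g ->
  measurable [set x | (l < `|g x|)%R].
Proof.
move=> mg; have := measurableT_comp (@normr_measurable R _) mg measurableT
  (@measurable_itv _ `]l, +oo[).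
by rewrite setTI; congr measurable; apply/seteqP; split => x /=; rewrite in_itv/= andbT.
Qed.

Lemma rearr_ge0 (g : T -> R) t : 0 <= rearr mu g t.
Proof. by apply: le_ereal_inf_tmp => _ [l [l0 _] <-]; rewrite lee_fin ltW. Qed.

Lemma rearr_eq0 (g : T -> R) t :
  (forall l, (0 < l)%R -> distrib mu g l <= t%:E) -> rearr mu g t = 0.
Proof. exact: ereal_inf_pos_all. Qed.

Lemma rearr_le (g1 g2 : T -> R) t : measurable_fun setT g1 -> measurable_fun setT g2 ->
  (forall x, (`|g1 x| <= `|g2 x|)%R) -> rearr mu g1 t <= rearr mu g2 t.
Proof.
move=> m1 m2 g12; apply: ereal_inf_le_tmp => _ [l [l0 dl] <-].
exists l => //; split => //; apply: le_trans dl.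
by apply: le_measure; rewrite ?inE; [exact: measurable_level|exact: measurable_level|
  move=> x /= /lt_le_trans; apply].
Qed.

Section indicator.
Variables (g : T -> R) (B : set T) (c : R).
Hypotheses (c0 : (0 < c)%R) (gB : forall x, B x -> (`|g x| = c)%R)
  (gNB : forall x, ~ B x -> g x = 0%R).

Lemma distrib_indic l : (0 <= l)%R -> distrib mu g l = if (l < c)%R then mu B else 0.
Proof.
move=> l0; rewrite /distrib -(measure0 mu); case: ifPn => lc; congr (mu _).
- apply/seteqP; split => x /=; last by move=> Bx; rewrite gB.
  by move=> lg; apply: contrapT => NBx; move: lg; rewrite gNB// normr0 ltNge l0.
- apply/seteqP; split => x //=; have [Bx|NBx] := pselect (B x).
  + by rewrite gB// (negbTE lc).
  + by rewrite gNB// normr0 ltNge l0.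
Qed.

Lemma rearr_indic t : (0 <= t)%R -> rearr mu g t = if t%:E < mu B then c%:E else 0.
Proof.
move=> t0; rewrite /rearr; case: ifPn => tB.
- apply: ereal_inf_pos_ge => // l l0; rewrite (distrib_indic (ltW l0)).
  case: ifPn => lc; split.
  + by move=> /(lt_le_trans tB); rewrite ltxx.
  + by move=> cl; move: lc; rewrite ltNge cl.
  + by move=> _; rewrite leNgt.
  + by rewrite lee_fin.
- apply: ereal_inf_pos_all => l l0; rewrite (distrib_indic (ltW l0)).
  by case: ifPn => _; [rewrite leNgt|rewrite lee_fin].
Qed.

End indicator.
End rearrangement.

Section modular.
Local Open Scope ereal_scope.
Context {d : measure_display} {T : measurableType d} {R : realType}
  (mu : {measure set T -> \bar R}) (phi h : R -> R).
Hypotheses (phi0 : phi 0%R = 0%R)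
  (phi_incr : forall x y : R, (0 <= x)%R -> (x < y)%R -> (phi x < phi y)%R)
  (h_gt0 : forall t : R, (0 <= t)%R -> t%:E < mu setT -> (0 < h t)%R)
  (h_noninc : forall s t : R, (0 <= s)%R -> (s <= t)%R -> t%:E < mu setT -> (h t <= h s)%R).

Lemma phiE_ge0 x : 0 <= x -> 0 <= phiE phi x.
Proof. by case: x => [r| |] //=; rewrite lee_fin; exact: phi_ge0. Qed.

Lemma phiE_le x y : 0 <= x -> x <= y -> phiE phi x <= phiE phi y.
Proof.
case: x => [r| |] //; case: y => [s| |] //=; rewrite ?lee_fin ?leey// => r0 rs.
exact: phi_le.
Qed.

Lemma modular_le (g1 g2 : T -> R) : measurable_fun setT g1 -> measurable_fun setT g2 ->
  (forall x, (`|g1 x| <= `|g2 x|)%R) -> modular mu phi h g1 <= modular mu phi h g2.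
Proof.
move=> m1 m2 g12; apply: ge0_le_integral_nomeas => t [t0 tX].
- by rewrite mule_ge0 ?phiE_ge0 ?rearr_ge0// lee_fin ltW// h_gt0.
- apply: lee_wpmul2r; first by rewrite lee_fin ltW// h_gt0.
  by apply: phiE_le; [exact: rearr_ge0|exact: rearr_le].
Qed.

Lemma modular_indic (g : T -> R) (B : set T) (c : R) : measurable B ->
  (0 < c)%R -> mu B < +oo ->
  (forall x, B x -> (`|g x| = c)%R) -> (forall x, ~ B x -> g x = 0%R) ->
  modular mu phi h g = (phi c)%:E * hint h (mu B).
Proof.
move=> mB c0 Boo gB gNB.
have BX : mu B <= mu setT by apply: le_measure; rewrite ?inE.
have [m mBm] : exists m, mu B = m%:E.
  by exists (fine (mu B)); rewrite fineK// ge0_fin_numE// measure_ge0.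
set S := [set t : R | (0 <= t)%R /\ t%:E < mu B].
have SX : S `<=` [set t | (0 <= t)%R /\ t%:E < mu setT].
  by move=> t [t0 tm]; split => //; exact: lt_le_trans BX.
have mS : measurable S by rewrite /S mBm set_ge0_lt_itv; exact: measurable_itv.
have mh : measurable_fun S (EFin \o h).
  by apply/measurable_EFinP; exact: (measurable_weight h_gt0 h_noninc mS SX).
have phic : (0 <= phi c)%R by apply: phi_ge0; rewrite // ltW.
rewrite /modular /hint -ge0_integralZl_EFin//; last first.
  by move=> t /SX [t0 tX]; rewrite lee_fin ltW// h_gt0.
rewrite [RHS]integral_mkcond [LHS]integral_mkcond; apply: eq_integral => t _.
rewrite !patchE; have [tS|tS] := boolP (t \in S).
- have [t0 tB] := set_mem tS.
  have tX : t \in supp_int mu by apply/mem_set/SX.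
  by rewrite tX (rearr_indic mu c0 gB gNB t0) tB.
- case: ifPn => // /set_mem [t0 tX].
  rewrite (rearr_indic mu c0 gB gNB t0) ifF /= ?phi0 ?mul0e//.
  by apply: contraNF tS => tB; exact: mem_set.
Qed.

End modular.

Section luxemburg_norm.
Local Open Scope ereal_scope.
Context {d : measure_display} {T : measurableType d} {R : realType}
  (mu : {measure set T -> \bar R}) (phi phi_inv h : R -> R).
Hypotheses (phi0 : phi 0%R = 0%R)
  (phi_incr : forall x y : R, (0 <= x)%R -> (x < y)%R -> (phi x < phi y)%R)
  (phi_invK : forall s : R, (0 <= s)%R -> (0 <= phi_inv s)%R /\ phi (phi_inv s) = s)
  (h_gt0 : forall t : R, (0 <= t)%R -> t%:E < mu setT -> (0 < h t)%R)
  (h_noninc : forall s t : R, (0 <= s)%R -> (s <= t)%R -> t%:E < mu setT -> (h t <= h s)%R).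
Local Notation F B := (fundamental phi_inv h (mu B)).

Lemma hint_measure_fin_gt0 (B : set T) : measurable B -> 0 < mu B -> mu B < +oo ->
  exists2 r : R, hint h (mu B) = r%:E & (0 < r)%R.
Proof.
move=> mB B0 Boo; have [m mBm] : exists m, mu B = m%:E.
  by exists (fine (mu B)); rewrite fineK// ge0_fin_numE// measure_ge0.
have BX : mu B <= mu setT by apply: le_measure; rewrite ?inE.
rewrite mBm; apply: (hint_fin_gt0 h_gt0 h_noninc); rewrite -?lte_fin -mBm//.
Qed.

Lemma fundamental_gt0 (B : set T) : measurable B -> 0 < mu B -> mu B < +oo -> (0 < F B)%R.
Proof.
move=> mB B0 Boo; have [r hr r0] := hint_measure_fin_gt0 mB B0 Boo.
by rewrite /fundamental hr; apply: (phi_inv_gt0 phi0 phi_invK); rewrite invr_gt0.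
Qed.

Section indicator.
Variables (g : T -> R) (B : set T) (c : R).
Hypotheses (mB : measurable B) (c0 : (0 < c)%R) (B0 : 0 < mu B) (Boo : mu B < +oo)
  (gB : forall x, B x -> (`|g x| = c)%R) (gNB : forall x, ~ B x -> g x = 0%R).

Lemma modular_indic_le1 (l : R) : (0 < l)%R ->
  modular mu phi h (fun x => g x / l)%R <= 1 <-> (c / F B <= l)%R.
Proof.
move=> l0; have [r hr r0] := hint_measure_fin_gt0 mB B0 Boo.
have cl0 : (0 < c / l)%R by rewrite divr_gt0.
have glB x : B x -> (`|g x / l| = c / l)%R by move=> Bx; rewrite normrM gB// normfV gtr0_norm.
have glNB x : ~ B x -> (g x / l = 0)%R by move=> NBx; rewrite gNB ?mul0r.
have p0 : (0 < phi_inv r^-1)%R by apply: (phi_inv_gt0 phi0 phi_invK); rewrite invr_gt0.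
rewrite (modular_indic phi0 phi_incr h_gt0 h_noninc mB cl0 Boo glB glNB) hr.
by rewrite (phi_le_inv phi_incr phi_invK r0 (ltW cl0)) /fundamental hr !ler_pdivrMr// mulrC.
Qed.

Lemma olnorm_indic : olnorm mu phi h g = (c / F B)%:E.
Proof.
apply: ereal_inf_pos_ge; first by rewrite divr_gt0// fundamental_gt0.
exact: modular_indic_le1.
Qed.

End indicator.

Lemma olnorm_ge_level (f : T -> R) (B : set T) (c : R) : measurable_fun setT f ->
  measurable B -> (0 < c)%R -> 0 < mu B -> mu B < +oo ->
  (forall x, B x -> (c <= `|f x|)%R) -> (c / F B)%:E <= olnorm mu phi h f.
Proof.
move=> mf mB c0 B0 Boo fB; apply: le_ereal_inf_tmp => _ [l [l0 fl] <-]; rewrite lee_fin.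
pose g x := (c * \1_B x)%R.
have gB x : B x -> (`|g x| = c)%R by move=> Bx; rewrite /g indicE mem_set// mulr1 gtr0_norm.
have gNB x : ~ B x -> g x = 0%R by move=> NBx; rewrite /g indicE memNset// mulr0.
apply/(modular_indic_le1 mB c0 B0 Boo gB gNB l0)/(le_trans _ fl)/modular_le => //.
- by apply: measurable_funM => //; apply: measurable_funM => //; exact: measurable_indic.
- exact: measurable_funM.
- move=> x; rewrite normrM [X in (_ <= X)%R]normrM ler_wpM2r//.
  by have [Bx|NBx] := pselect (B x); [rewrite gB ?fB|rewrite gNB// normr0].
Qed.

Lemma olnorm_eq0 (g : T -> R) :
  (forall e : R, (0 < e)%R -> mu [set x | (e < `|g x|)%R] = 0) -> olnorm mu phi h g = 0.
Proof.
move=> g_null; apply: ereal_inf_pos_all => l l0.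
rewrite /modular integral0_eq// => t [t0 _].
rewrite rearr_eq0 /= ?phi0 ?mul0e// => e e0; rewrite /distrib.
have -> : [set x | (e < `|g x / l|)%R] = [set x | (l * e < `|g x|)%R].
  apply/seteqP; split => x /=;
    by rewrite normrM normfV (gtr0_norm l0) ltr_pdivlMr// mulrC.
by rewrite g_null ?mulr_gt0// lee_fin.
Qed.

Lemma olnorm_neq0_level (g : T -> R) : olnorm mu phi h g != 0 ->
  exists2 e : R, (0 < e)%R & 0 < mu [set x | (e < `|g x|)%R].
Proof.
apply: contra_neqP => nlevel; apply: olnorm_eq0 => e e0.
apply/eqP; rewrite eq_le measure_ge0 andbT leNgt; apply/negP => level_gt0.
by apply: nlevel; exists e.
Qed.

End luxemburg_norm.

Lemma sigma_finite_pos_fin_subset {d} {T : measurableType d} {R : realType}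
  (mu : {measure set T -> \bar R}) (E : set T) :
  sigma_finite setT mu -> measurable E -> (0 < mu E)%E ->
  exists2 B, B `<=` E & pos_fin_set mu B.
Proof.
case=> F FT mF mE E0.
have mEF i : measurable (E `&` F i) by exact: measurableI mE (mF i).1.
have [i EFi] : exists i, (0 < mu (E `&` F i))%E.
  apply: contrapT => /forallNP EF0.
  have [N [mN N0 EN]] : mu.-negligible E.
    rewrite -(setIT E) FT setI_bigcupr; apply: negligible_bigcup => k.
    exists (E `&` F k); split => //; apply/eqP.
    by rewrite eq_le measure_ge0 andbT leNgt; apply/negP/EF0.
  have : (mu E <= mu N)%E := le_measure mu (mem_set mE) (mem_set mN) EN.
  by rewrite N0 leNgt E0.
exists (E `&` F i) => //; split => //.
apply: le_lt_trans (mF i).2; apply: le_measure; rewrite ?inE//; exact: (mF i).1.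
Qed.

Section expansivity.
Local Open Scope ereal_scope.
Context {d : measure_display} {T : measurableType d} {R : realType}
  (mu : {measure set T -> \bar R}) (phi phi_inv h : R -> R)
  (tau tauinv : T -> T) (M M' : R).
Hypotheses (phi0 : phi 0%R = 0%R)
  (phi_incr : forall x y : R, (0 <= x)%R -> (x < y)%R -> (phi x < phi y)%R)
  (phi_invK : forall s : R, (0 <= s)%R -> (0 <= phi_inv s)%R /\ phi (phi_inv s) = s)
  (h_gt0 : forall t : R, (0 <= t)%R -> t%:E < mu setT -> (0 < h t)%R)
  (h_noninc : forall s t : R, (0 <= s)%R -> (s <= t)%R -> t%:E < mu setT -> (h t <= h s)%R)
  (tauK : cancel tau tauinv) (tauinvK : cancel tauinv tau)
  (mtau : measurable_fun setT tau)
  (mtau_img : forall A : set T, measurable A -> measurable (tau @` A))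
  (M0 : (0 < M)%R) (muM : forall A, measurable A -> mu (tau @^-1` A) <= M%:E * mu A)
  (M'0 : (0 < M')%R) (muM' : forall A, measurable A -> mu (tau @` A) <= M'%:E * mu A).
Local Notation ti := (tau_iter tau tauinv).
Local Notation F B := (fundamental phi_inv h (mu B)).

Let pos_fin_ti n A : pos_fin_set mu A -> pos_fin_set mu (ti n @^-1` A).
Proof. exact: (pos_fin_set_preimage_tau_iter tauK tauinvK mtau mtau_img M0 muM M'0 muM' n). Qed.

Let F_gt0 A : pos_fin_set mu A -> (0 < F A)%R.
Proof. by case=> mA A0 Aoo; exact: (fundamental_gt0 phi0 phi_invK h_gt0 h_noninc mA A0 Aoo). Qed.

Lemma expansive_fundamental_half (B : set T) : ol_expansive mu phi h tau tauinv ->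
  pos_fin_set mu B -> exists m, (2 * F (ti m @^-1` B) <= F B)%R.
Proof.
move=> expC posB; have [mB B0 Boo] := posB; have FB0 := F_gt0 posB.
pose g x := (F B * \1_B x)%R.
have gB x : B x -> `|g x|%R = F B by move=> Bx; rewrite /g indicE mem_set// mulr1 gtr0_norm.
have gNB x : ~ B x -> g x = 0%R by move=> NBx; rewrite /g indicE memNset// mulr0.
have g_OL : in_OL mu phi h g.
  split; first by apply: measurable_funM => //; exact: measurable_indic.
  exists 1%R; split => //.
  rewrite (@modular_indic _ _ _ _ _ _ phi0 phi_incr h_gt0 h_noninc (fun x => 1 * g x)%R _ _
    mB FB0 Boo).
  - by have [r -> _] := hint_measure_fin_gt0 h_gt0 h_noninc mB B0 Boo; rewrite -EFinM ltry.
  - by move=> x Bx; rewrite mul1r gB.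
  - by move=> x NBx; rewrite mul1r gNB.
have g1 : olnorm mu phi h g = 1.
  rewrite (olnorm_indic phi0 phi_incr phi_invK h_gt0 h_noninc mB FB0 B0 Boo gB gNB).
  by rewrite divff// gt_eqF.
have [m gm] := expC g g_OL g1; exists m.
have [mC C0 Coo] := pos_fin_ti m posB.
rewrite (olnorm_indic phi0 phi_incr phi_invK h_gt0 h_noninc mC FB0 C0 Coo) in gm.
- by move: gm; rewrite lee_fin ler_pdivlMr// F_gt0.
- by move=> x Cx; rewrite /= gB.
- by move=> x NCx; rewrite /= gNB.
Qed.

Lemma expansive_fundamental_inf0 : ol_expansive mu phi h tau tauinv ->
  forall A, measurable A -> 0 < mu A -> mu A < +oo ->
  inf (range (fun n => F (ti n @^-1` A))) = 0%R.
Proof.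
move=> expC A mA A0 Aoo; have posA : pos_fin_set mu A by [].
apply: (@inf_range_eq0 _ _ _ (F A) 0%R) => [n|]; first exact/F_gt0/pos_fin_ti.
elim=> [|k [n Fn]]; first by exists 0%R; rewrite expr0 mul1r.
have [m Fm] := expansive_fundamental_half expC (pos_fin_ti n posA).
exists (n + m)%R; have <- : ti m @^-1` (ti n @^-1` A) = ti (n + m) @^-1` A.
  by apply/seteqP; split => x /=; rewrite tau_iterD.
rewrite exprSr -mulrA; apply: le_trans Fn.
by apply: ler_wpM2l; rewrite ?exprn_ge0.
Qed.

Lemma fundamental_inf0_expansive : sigma_finite setT mu ->
  (forall A, measurable A -> 0 < mu A -> mu A < +oo ->
     inf (range (fun n => F (ti n @^-1` A))) = 0%R) ->
  ol_expansive mu phi h tau tauinv.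
Proof.
move=> mu_sf inf0 g [mg _] g1.
have [e e0 level_gt0] : exists2 e : R, (0 < e)%R & 0 < mu [set x | (e < `|g x|)%R].
  by apply: (@olnorm_neq0_level _ _ _ mu phi h phi0); rewrite g1 oner_neq0.
have [B Be posB] := sigma_finite_pos_fin_subset mu_sf (measurable_level e mg) level_gt0.
have [mB B0 Boo] := posB.
have [_ [n _ <-] Fn] : exists2 x, range (fun n => F (ti n @^-1` B)) x & (x < e / 2)%R.
  by apply: inf_lt; [exists (F (ti 0%R @^-1` B)), 0%R|rewrite inf0// divr_gt0].
exists n; have [mC C0 Coo] := pos_fin_ti n posB.
have mgn : measurable_fun setT (g \o ti n).
  exact: measurableT_comp mg (measurable_tau_iter tauK tauinvK mtau mtau_img n).
apply: le_trans (olnorm_ge_level phi0 phi_incr phi_invK h_gt0 h_noninc mgn mC e0 C0 Coo _).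
- by rewrite lee_fin ler_pdivlMr ?F_gt0// -ler_pdivlMl// ltW// mulrC.
- by move=> x /Be; exact: ltW.
Qed.

End expansivity.

Theorem mainTheorem1 (d : measure_display) (T : measurableType d) (R : realType)
  (mu : {measure set T -> \bar R})
  (phi phi_inv h : R -> R) (tau tauinv : T -> T) (M M' : R) :
  (* measure space is sigma-finite *)
  sigma_finite setT mu ->
  (* Orlicz function *)
  (forall x y t : R, 0 <= x -> 0 <= y -> 0 <= t <= 1 ->
     phi (t * x + (1 - t) * y) <= t * phi x + (1 - t) * phi y) ->
  phi 0 = 0 ->
  {within [set x : R | 0 <= x], continuous phi} ->
  (forall x y : R, 0 <= x -> x < y -> phi x < phi y) ->
  phi x @[x --> +oo] --> +oo ->
  (* phi_inv is the inverse of phi on [0, +oo) *)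
  (forall s : R, 0 <= s -> phi_inv (phi s) = s) ->
  (forall s : R, 0 <= s -> 0 <= phi_inv s /\ phi (phi_inv s) = s) ->
  (* weight h on [0, mu X) *)
  (forall t : R, 0 <= t -> (t%:E < mu setT)%E -> 0 < h t) ->
  (forall s t : R, 0 <= s -> s <= t -> (t%:E < mu setT)%E -> h t <= h s) ->
  (forall b : R, 0 <= b -> (b%:E < mu setT)%E ->
     lebesgue_measure.-integrable `[0, b] (fun t => (h t)%:E)) ->
  (* tau bijective (tauinv its inverse), bi-measurable *)
  cancel tau tauinv -> cancel tauinv tau ->
  measurable_fun setT tau ->
  (forall A : set T, measurable A -> measurable (tau @` A)) ->
  (* measure conditions on tau and tau^{-1} *)
  0 < M -> (forall A : set T, measurable A -> (mu (tau @^-1` A) <= M%:E * mu A)%E) ->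
  0 < M' -> (forall A : set T, measurable A -> (mu (tau @` A) <= M'%:E * mu A)%E) ->
  ol_expansive mu phi h tau tauinv <->
  (forall A : set T, measurable A -> (0 < mu A)%E -> (mu A < +oo)%E ->
     inf (range (fun n : int =>
        fundamental phi_inv h (mu (tau_iter tau tauinv n @^-1` A)))) = 0).
Proof.
move=> mu_sf _ phi0 _ phi_incr _ _ phi_invK h_gt0 h_noninc _ tauK tauinvK mtau mtau_img
  M0 muM M'0 muM'.
split.
- exact: (expansive_fundamental_inf0 phi0 phi_incr phi_invK h_gt0 h_noninc
    tauK tauinvK mtau mtau_img M0 muM M'0 muM').
- exact: (fundamental_inf0_expansive phi0 phi_incr phi_invK h_gt0 h_noninc
    tauK tauinvK mtau mtau_img M0 muM M'0 muM' mu_sf).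
Qed.
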